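(* Let $Z=\{P_1,\dots,P_r\}\subset\mathbb{P}^2$ be a finite set of points and let $m>n$ be positive integers. Put $\beta=\alpha(I(mZ))$, $\gamma=\alpha(I(nZ))$ and $\alpha=\beta-\gamma$. Let $C$ be an effective divisor of degree $\beta$ with $\operatorname{ord}_{P_i}C\ge m$ for all $i$ (i.e. $C\in I(mZ)_\beta$), and suppose $C=C_1+C_2$ is a sum of two nonzero effective divisors. For $j=1,2$ let $\beta_j=\deg(C_j)$, $m_i^{(j)}=\operatorname{ord}_{P_i}C_j$, $\mathbf{m}^{(j)}=(m_1^{(j)},\dots,m_r^{(j)})$, $n_i^{(j)}=\max\{m_i^{(j)}-(m-n),0\}$ and $\mathbf{n}^{(j)}=(n_1^{(j)},\dots,n_r^{(j)})$. Then for $j=1,2$: (i) $\beta_j=\alpha(I(\mathbf{m}^{(j)}Z))$; (ii) $\alpha(I(\mathbf{m}^{(j)}Z))-\alpha(I(\mathbf{n}^{(j)}Z))\le\alpha$.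
   Context: Work over an algebraically closed field $\mathbb{K}$ of characteristic zero, $R=\mathbb{K}[x_0,x_1,x_2]$, $\mathbb{P}^2=\operatorname{Proj}R$. For a point $P$, $I(P)\subset R$ is its homogeneous maximal ideal. For $Z=\{P_1,\dots,P_r\}$ and a vector $\mathbf{m}=(m_1,\dots,m_r)$ of non-negative integers, $I(\mathbf{m}Z)=I(P_1)^{m_1}\cap\dots\cap I(P_r)^{m_r}$ (with $I(P)^0=R$); for an integer $m$, $I(mZ)=I(\mathbf{m}Z)$ with $\mathbf{m}=(m,\dots,m)$, which is the $m$-th symbolic power of $I(Z)$. For a homogeneous ideal $J=\bigoplus_n J_n$, the initial degree is $\alpha(J)=\min\{n: J_n\ne0\}$ (so $\alpha(R)=0$). A divisor ''in $J_n$'' means a plane curve (effective divisor) defined by a nonzero element of $J_n$; $\operatorname{ord}_P$ denotes the multiplicity of a divisor at $P$. *)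

From HB Require Import structures.
From mathcomp Require Import all_boot all_order all_algebra.
From mathcomp Require Import mpoly.
From Stdlib Require Import ClassicalEpsilon.
Set Implicit Arguments. Unset Strict Implicit. Unset Printing Implicit Defensive.
Import Order.TTheory GRing.Theory Num.Theory.
Local Open Scope ring_scope.

Section PlaneCurves.
Variable K : fieldType.

(* A point P of P^2 is given by homogeneous coordinates v : 'I_3 -> K, v <> 0. *)
Definition proj_point (v : 'I_3 -> K) : Prop := exists i, v i != 0.

Definition shift (v : 'I_3 -> K) (f : {mpoly K[3]}) : {mpoly K[3]} :=
  f \mPo [tuple ('X_i + (v i)%:MP) | i < 3].

(* f \in I(P)^k : every monomial of f(v + X) has total degree >= k
   (for homogeneous f this is exactly membership in the k-th power of the
   homogeneous maximal ideal of P). *)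
Definition in_Ipow (v : 'I_3 -> K) (k : nat) (f : {mpoly K[3]}) : Prop :=
  forall mon : 'X_{1..3}, (mdeg mon < k)%N -> (shift v f)@_mon = 0.

(* multiplicity ord_P of the curve f = 0 at P : lowest total degree of a
   monomial of f(v + X) (meaningful for f <> 0). *)
Definition mult (v : 'I_3 -> K) (f : {mpoly K[3]}) : nat :=
  let g := shift v f in \big[minn/msize g]_(mon <- msupp g) mdeg mon.

Definition in_IZ (r : nat) (P : 'I_r -> 'I_3 -> K) (ms : 'I_r -> nat)
  (f : {mpoly K[3]}) : Prop := forall i, in_Ipow (P i) (ms i) f.

Definition IZ_nonzero_in_deg r (P : 'I_r -> 'I_3 -> K) ms (d : nat) : Prop :=
  exists f : {mpoly K[3]}, [/\ f != 0, f \is d.-homog & in_IZ P ms f].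

Definition is_initdeg r (P : 'I_r -> 'I_3 -> K) ms (a : nat) : Prop :=
  IZ_nonzero_in_deg P ms a /\ forall d, IZ_nonzero_in_deg P ms d -> (a <= d)%N.

(* alpha(I(ms Z)) = min { d : I(ms Z)_d <> 0 } (this minimum always exists). *)
Definition initdeg r (P : 'I_r -> 'I_3 -> K) (ms : 'I_r -> nat) : nat :=
  epsilon (inhabits 0%N) (is_initdeg P ms).

End PlaneCurves.

From HB Require Import structures.
From mathcomp Require Import all_boot all_order all_algebra.
From mathcomp Require Import mpoly.
From mathcomp.multinomials Require Import ssrcomplements.
From Stdlib Require Import ClassicalEpsilon Classical Wf_nat.
From mathcomp Require Import zify.
Set Implicit Arguments. Unset Strict Implicit. Unset Printing Implicit Defensive.
Import Order.TTheory GRing.Theory Num.Theory.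
Local Open Scope ring_scope.

(* Since ord_P is additive, ord_P C1 + ord_P C2 >= m at
   every P_i.  Multiplying by C2 maps I(m^(1) Z)_d into I(m Z)_(d + b2), so
   alpha(I(m^(1) Z)) + b2 >= beta = b1 + b2, while C1 itself lies in
   I(m^(1) Z)_(b1); this is (i).  Likewise multiplying by C2 maps
   I(n^(1) Z)_d into I(n Z)_(d + b2), hence gamma <= alpha(I(n^(1) Z)) + b2,
   which rearranges to (ii). *)

Section MlastProduct.
Context {R : nzRingType} {k : nat}.
Implicit Types p q : {mpoly R[k]}.

Lemma mlastcM p q : (p * q)@_(mlast p + mlast q) = p@_(mlast p) * q@_(mlast q).
Proof.
have [->|nz_p] := eqVneq p 0; first by rewrite !mcoeff0 !mul0r mcoeff0.
have [->|nz_q] := eqVneq q 0; first by rewrite !mcoeff0 !mulr0 mcoeff0.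
rewrite mpolyME (bigD1_seq (mlast p, mlast q)) /=; first last.
+ by rewrite allpairs_uniq ?msupp_uniq // => -[? ?] [].
+ by rewrite allpairs_f// !mlast_supp.
rewrite mcoeffD mcoeffZ mcoeffX eqxx mulr1.
rewrite big_seq_cond raddf_sum /= big1 ?addr0 //.
case=> m1 m2; rewrite in_allpairs//= -andbA; case/and3P.
move=> m1_in_p m2_in_q ne_m_lc; rewrite mcoeffZ mcoeffX.
move/mlast_lemc: m1_in_p; move/mlast_lemc: m2_in_q.
rewrite le_eqVlt => /predU1P[m2E|]; last first.
  by move=> lt /lemc_lt_add /(_ lt) /gt_eqF ->; rewrite mulr0.
move: ne_m_lc; rewrite -m2E xpair_eqE eqxx andbT.
rewrite le_eqVlt eq_sym => /negbTE -> /=; rewrite eqm_add2r.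
by move/gt_eqF=> ->; rewrite mulr0.
Qed.

End MlastProduct.

Lemma comp_mpolyA (R : comNzRingType) (n k l : nat) (p : {mpoly R[n]})
    (lq : n.-tuple {mpoly R[k]}) (lr : k.-tuple {mpoly R[l]}) :
  (p \mPo lq) \mPo lr = p \mPo [tuple tnth lq i \mPo lr | i < n].
Proof.
rewrite [p \mPo lq]comp_mpolyEX [p \mPo [tuple _ | _ < _]]comp_mpolyEX.
rewrite raddf_sum /=; apply: eq_bigr => mon _.
rewrite comp_mpolyZ comp_mpolyX !rmorph_prod /= comp_mpolyX.
by congr (_ *: _); apply: eq_bigr => i _; rewrite rmorphXn tnth_mktuple.
Qed.

Section Multiplicity.
Variable K : fieldType.
Implicit Types (f g : {mpoly K[3]}) (v : 'I_3 -> K).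

Lemma shiftM v f g : shift v (f * g) = shift v f * shift v g.
Proof. exact: rmorphM. Qed.

Lemma shiftK v : cancel (shift v) (shift (fun i => - v i)).
Proof.
move=> f; rewrite /shift comp_mpolyA -[RHS]comp_mpoly_id; congr comp_mpoly.
apply: eq_from_tnth => i; rewrite !tnth_mktuple comp_mpolyD comp_mpolyXU.
by rewrite comp_mpolyC -tnth_nth tnth_mktuple -addrA -rmorphD addNr rmorph0 addr0.
Qed.

Lemma shift_eq0 v f : (shift v f == 0) = (f == 0).
Proof.
apply/eqP/eqP => [E|->]; last exact: comp_mpoly0.
by rewrite -(shiftK v f) E /shift comp_mpoly0.
Qed.

(* The monomial order of mpoly refines total degree, so the least monomial
   of the support has the least degree. *)
Lemma mult_mlast v f : f != 0 -> mult v f = mdeg (mlast (shift v f)).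
Proof.
rewrite -(shift_eq0 v) => nz; apply/anti_leq/andP; split.
  exact: (@ge_bigmin_seq _ nat _ _ _ _ predT _ (mlast_supp nz)).
rewrite /mult big_seq; apply: (@le_bigmin _ nat).
  exact/ltnW/msize_mdeg_lt/mlast_supp.
by move=> mon /mlast_lemc /lemc_mdeg.
Qed.

Lemma in_Ipow_mult v f : in_Ipow v (mult v f) f.
Proof.
move=> mon; apply: contraTeq; rewrite -mcoeff_msupp -leqNgt => mon_in.
exact: (@ge_bigmin_seq _ nat _ _ _ _ predT _ mon_in).
Qed.

Lemma in_Ipow_le v f k l : (l <= k)%N -> in_Ipow v k f -> in_Ipow v l f.
Proof. by move=> lk fk mon lt; apply/fk/(leq_trans lt). Qed.

Lemma mult_ge v f k : f != 0 -> in_Ipow v k f -> (k <= mult v f)%N.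
Proof.
move=> nz fk; rewrite mult_mlast // leqNgt; apply: contraTN isT => /fk/eqP.
by rewrite mcoeff_eq0 mlast_supp ?shift_eq0.
Qed.

Lemma in_IpowM v f g k l :
  in_Ipow v k f -> in_Ipow v l g -> in_Ipow v (k + l) (f * g).
Proof.
move=> fk gl mon lt; rewrite shiftM mcoeffM big1 // => -[m1 m2] /= /eqP E.
have [lt1|ge1] := ltnP (mdeg m1) k; first by rewrite fk ?mul0r.
rewrite gl ?mulr0 // -(ltn_add2l (mdeg m1)) -mdegD -E (leq_trans lt) //.
by rewrite leq_add2r.
Qed.

Lemma multM_le v f g : f != 0 -> g != 0 ->
  (mult v (f * g) <= mult v f + mult v g)%N.
Proof.
move=> nz_f nz_g; rewrite (mult_mlast v nz_f) (mult_mlast v nz_g) -mdegD.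
apply: (@ge_bigmin_seq _ nat _ _ _ _ predT) => //.
rewrite mcoeff_msupp shiftM mlastcM.
by rewrite mulf_neq0 // -mcoeff_msupp mlast_supp ?shift_eq0.
Qed.

End Multiplicity.

Section InitialDegree.
Variables (K : fieldType) (r : nat) (P : 'I_r -> 'I_3 -> K).
Implicit Types (ms : 'I_r -> nat) (f g : {mpoly K[3]}).

Lemma initdegP ms d : IZ_nonzero_in_deg P ms d -> is_initdeg P ms (initdeg P ms).
Proof.
move=> nz_d; apply: epsilon_spec.
have [a [[nz_a a_min] _]] := @dec_inh_nat_subset_has_unique_least_element
  (IZ_nonzero_in_deg P ms) (fun e => classic _) (ex_intro _ d nz_d).
by exists a; split=> // e /a_min/ssrnat.leP.
Qed.

Lemma initdeg_min ms d : IZ_nonzero_in_deg P ms d -> (initdeg P ms <= d)%N.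
Proof. by move=> nz_d; apply: (initdegP nz_d).2. Qed.

Lemma initdeg_nonzero ms d :
  IZ_nonzero_in_deg P ms d -> IZ_nonzero_in_deg P ms (initdeg P ms).
Proof. by move=> nz_d; apply: (initdegP nz_d).1. Qed.

Lemma IZ_nonzero_in_deg_mult ms f d : f != 0 -> f \is d.-homog ->
  (forall i, ms i <= mult (P i) f)%N -> IZ_nonzero_in_deg P ms d.
Proof.
by move=> nz_f f_d le_ms; exists f; split=> // i; apply/in_Ipow_le/in_Ipow_mult.
Qed.

Lemma IZ_nonzero_in_degM ms ms' g d e :
  IZ_nonzero_in_deg P ms d -> g != 0 -> g \is e.-homog ->
  (forall i, ms' i <= ms i + mult (P i) g)%N -> IZ_nonzero_in_deg P ms' (d + e).
Proof.
move=> [f [nz_f f_d f_ms]] nz_g g_e le_ms'; exists (f * g); split.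
- by rewrite mulf_neq0.
- exact: dhomogM.
by move=> i; apply/in_Ipow_le/in_IpowM/in_Ipow_mult/f_ms.
Qed.

End InitialDegree.

Section MinimalCurveFactor.
Variables (K : fieldType) (r : nat) (P : 'I_r -> 'I_3 -> K) (m : nat).
Variables (f1 f2 : {mpoly K[3]}) (b1 b2 : nat).
Hypotheses (nz_f1 : f1 != 0) (nz_f2 : f2 != 0).
Hypotheses (f1_b1 : f1 \is b1.-homog) (f2_b2 : f2 \is b2.-homog).
Hypothesis f_min : f1 * f2 \is (initdeg P (fun _ => m)).-homog.
Hypothesis f_mZ : in_IZ P (fun _ => m) (f1 * f2).

Let mult1 i := mult (P i) f1.

Lemma initdeg_minimal_curve : initdeg P (fun _ => m) = (b1 + b2)%N.
Proof. by apply: dhomog_uniq f_min (dhomogM _ _); rewrite ?mulf_neq0. Qed.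

Lemma minimal_curve_mult_ge i : (m <= mult1 i + mult (P i) f2)%N.
Proof. by apply: leq_trans (multM_le _ nz_f1 nz_f2); rewrite mult_ge ?mulf_neq0. Qed.

Lemma initdeg_factor_mult : b1 = initdeg P mult1.
Proof.
have nz_b1 : IZ_nonzero_in_deg P mult1 b1.
  by apply: (IZ_nonzero_in_deg_mult nz_f1 f1_b1) => i; rewrite /mult1.
have nz_init := IZ_nonzero_in_degM (initdeg_nonzero nz_b1) nz_f2 f2_b2
  minimal_curve_mult_ge.
apply/anti_leq; rewrite initdeg_min // andbT -(leq_add2r b2).
by rewrite -initdeg_minimal_curve initdeg_min.
Qed.

Lemma initdeg_factor_diff_le n : (n <= m)%N ->
  (initdeg P mult1)%:Z - (initdeg P (fun i => mult1 i - (m - n))%N)%:Z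
    <= (initdeg P (fun _ => m))%:Z - (initdeg P (fun _ => n))%:Z.
Proof.
move=> le_nm; set ns := fun i => (mult1 i - (m - n))%N.
have nz_ns : IZ_nonzero_in_deg P ns b1.
  by apply: (IZ_nonzero_in_deg_mult nz_f1 f1_b1) => i; exact: leq_subr.
have le_n i : (n <= ns i + mult (P i) f2)%N.
  by have := minimal_curve_mult_ge i; rewrite /ns; lia.
have := initdeg_min (IZ_nonzero_in_degM (initdeg_nonzero nz_ns) nz_f2 f2_b2 le_n).
rewrite initdeg_minimal_curve -initdeg_factor_mult; lia.
Qed.

End MinimalCurveFactor.

Theorem lemma2p1 (K : closedFieldType) (Kchar0 : [pchar K] =i pred0)
  (r : nat) (P : 'I_r -> 'I_3 -> K) (HP : forall i, proj_point (P i))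
  (m n : nat) (Hn : (0 < n)%N) (Hnm : (n < m)%N)
  (f f1 f2 : {mpoly K[3]}) (b1 b2 : nat)
  (Hf0 : f != 0)
  (Hfdeg : f \is (initdeg P (fun _ => m)).-homog)
  (HfI : in_IZ P (fun _ => m) f)
  (Hsum : f = f1 * f2)
  (Hf1 : f1 != 0) (Hf2 : f2 != 0)
  (Hb1 : (0 < b1)%N) (Hb2 : (0 < b2)%N)
  (Hf1deg : f1 \is b1.-homog) (Hf2deg : f2 \is b2.-homog) :
  let alpha := ((initdeg P (fun _ => m))%:Z - (initdeg P (fun _ => n))%:Z) in
  let mj g := fun i => mult (P i) g in
  let nj g := fun i => (mult (P i) g - (m - n))%N in
  [/\ b1 = initdeg P (mj f1), b2 = initdeg P (mj f2),
      (initdeg P (mj f1))%:Z - (initdeg P (nj f1))%:Z <= alpha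
    & (initdeg P (mj f2))%:Z - (initdeg P (nj f2))%:Z <= alpha].
Proof.
move=> alpha mj nj; have le_nm := ltnW Hnm.
have Hfdeg' : f2 * f1 \is (initdeg P (fun _ => m)).-homog by rewrite mulrC -Hsum.
have HfI' : in_IZ P (fun _ => m) (f2 * f1) by rewrite mulrC -Hsum.
rewrite Hsum in Hfdeg HfI.
split.
- exact: initdeg_factor_mult Hf1 Hf2 Hf1deg Hf2deg Hfdeg HfI.
- exact: initdeg_factor_mult Hf2 Hf1 Hf2deg Hf1deg Hfdeg' HfI'.
- exact: initdeg_factor_diff_le Hf1 Hf2 Hf1deg Hf2deg Hfdeg HfI _ le_nm.
- exact: initdeg_factor_diff_le Hf2 Hf1 Hf2deg Hf1deg Hfdeg' HfI' _ le_nm.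
Qed.
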